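(* Let $p \geq m \geq 1$ and $q \geq s \geq 1$ be integers. Then there is a graph homomorphism from ${\sf M}_p(C_{2q+1})$ to ${\sf M}_m(C_{2s+1})$.
   Context: $C_n$ is the cycle on $n$ vertices. A homomorphism from $G$ to $H$ is a map $f:V(G)\to V(H)$ with $f(u)f(v)\in E(H)$ whenever $uv\in E(G)$. For a graph $G$ with vertex set $V_0=\{\langle 0,j\rangle : 0\le j\le n-1\}$ and edge set $E_0$, and $m>0$, the generalized Mycielskian ${\sf M}_m(G)$ has vertex set $V_0\cup V_1\cup\cdots\cup V_m\cup\{u\}$ where $V_i=\{\langle i,j\rangle: 0\le j\le n-1\}$, and edge set $E_0\cup E_1\cup\cdots\cup E_m\cup\{\langle m,j\rangle u: 0\le j\le n-1\}$, where $E_i=\{\langle i-1,j\rangle\langle i,k\rangle : \langle 0,j\rangle\langle 0,k\rangle\in E_0\}$ for $1\le i\le m$. *)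

From mathcomp Require Import all_boot.
Set Implicit Arguments. Unset Strict Implicit. Unset Printing Implicit Defensive.

Definition cycle_adj (n : nat) : rel 'I_n :=
  fun j k => (val k == (val j).+1 %% n) || (val j == (val k).+1 %% n).

(* Vertex type of the generalized Mycielskian M_m(G) for G on 'I_n:
   Some (i, j) is <i,j> with 0 <= i <= m, None is the apex u. *)
Definition myc_vertex (m n : nat) := option ('I_m.+1 * 'I_n)%type.

Definition myc_adj (n : nat) (adj : rel 'I_n) (m : nat) : rel (myc_vertex m n) :=
  fun x y =>
    match x, y with
    | Some (i, j), Some (i', k) =>
        adj j k && [|| (val i == 0) && (val i' == 0),
                       (val i).+1 == val i' | (val i').+1 == val i]
    | Some (i, _), None => val i == m
    | None, Some (i, _) => val i == m
    | None, None => false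
    end.

Definition graph_hom (T1 T2 : Type) (e1 : rel T1) (e2 : rel T2) (f : T1 -> T2) :=
  forall x y, e1 x y -> e2 (f x) (f y).

From mathcomp Require Import all_boot.
From mathcomp Require Import zify.

(* A homomorphism G -> H of the base graphs, together with the level map
   i |-> max(0, i - (p - m)), gives a homomorphism M_p(G) -> M_m(H): levels
   below p - m collapse onto level 0, whose own edges carry edges of G, and
   level p lands on level m, next to the apex.  For odd cycles, C_(2q+1)
   folds onto C_(2s+1) by fixing 0..2s and sending the remaining path
   2s+1, ..., 2q alternately to 2s-1 and 2s; the closing edge 2q ~ 0 then
   becomes 2s ~ 0. *)

Lemma cycle_adjE (n : nat) (j k : 'I_n) :
  cycle_adj j k =
  [|| k == j.+1 :> nat, j == k.+1 :> nat,
      (j.+1 == n) && (k == 0 :> nat) | (k.+1 == n) && (j == 0 :> nat)].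
Proof.
have modS (a : 'I_n) : a.+1 %% n = if a.+1 == n then 0 else a.+1.
  by case: eqP => [->|ne]; rewrite ?modnn // modn_small // ltn_neqAle ltn_ord andbT; apply/eqP.
have := ltn_ord j; have := ltn_ord k; rewrite /cycle_adj /= !modS.
by case: (j.+1 =P n); case: (k.+1 =P n); lia.
Qed.

Definition odd_cycle_fold (s q : nat) (j : 'I_(2 * q).+1) : 'I_(2 * s).+1 :=
  inord (if j <= 2 * s then nat_of_ord j else if odd j then (2 * s).-1 else 2 * s).

Lemma odd_cycle_fold_hom (s q : nat) : s <= q ->
  graph_hom (@cycle_adj (2 * q).+1) (@cycle_adj (2 * s).+1) (odd_cycle_fold s q).
Proof.
move=> le_sq j k; have := ltn_ord j; have := ltn_ord k.
by rewrite !cycle_adjE /odd_cycle_fold !inordK; repeat case: ifP; lia.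
Qed.

Definition myc_map {n n' : nat} (g : 'I_n -> 'I_n') (p m : nat)
    (x : myc_vertex p n) : myc_vertex m n' :=
  omap (fun v => (inord (val v.1 - (p - m)), g v.2)) x.

Lemma myc_map_hom (n n' : nat) (e : rel 'I_n) (e' : rel 'I_n') (g : 'I_n -> 'I_n')
    (p m : nat) :
  m <= p -> graph_hom e e' g -> graph_hom (@myc_adj n e p) (@myc_adj n' e' m) (myc_map g p m).
Proof.
move=> le_mp hom_g.
have lvl (i : 'I_p.+1) : i - (p - m) < m.+1 by have := ltn_ord i; lia.
move=> [[i j]|] [[i' k]|] //=; rewrite ?inordK ?lvl //; try lia.
by case/andP=> /hom_g -> levels; apply/andP; split=> //; lia.
Qed.

Theorem lemma11 (p m q s : nat) :
  1 <= m -> m <= p -> 1 <= s -> s <= q ->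
  exists f : myc_vertex p (2 * q).+1 -> myc_vertex m (2 * s).+1,
    graph_hom (@myc_adj (2 * q).+1 (@cycle_adj (2 * q).+1) p)
              (@myc_adj (2 * s).+1 (@cycle_adj (2 * s).+1) m) f.
Proof.
move=> _ le_mp _ le_sq; exists (myc_map (odd_cycle_fold s q) p m).
exact/myc_map_hom/odd_cycle_fold_hom.
Qed.
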